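(* Let $\mu$ be a positive Radon measure on $\mathbb R^n$ with power growth of exponent $0<\alpha\le n$. Let $I$ be a dyadic cube and $x\in I$. Then $$\int_I\frac{1}{|t-x|^{\alpha-1}}\,d\mu(t)\lesssim\ell(I)\,\rho_{\rm in}(I),$$ with implicit constant depending only on $n$ and $\alpha$.
   Context: $\mu$ has power growth of exponent $\alpha$ if $\mu(I)\lesssim\ell(I)^\alpha$ for every cube $I=\prod_{i=1}^n[a_i,a_i+l)$ ($\ell(I)=l$). Dyadic cubes are $\prod_{i=1}^n2^{-m}[j_i,j_i+1)$, $j_i,m\in\mathbb Z$. $\rho_{\rm in}(I)=\sup_{t\in I,\,0<\lambda<\ell(I)}\mu(I\cap B(t,\lambda))/\lambda^\alpha$, where $B(t,\lambda)$ is the open Euclidean ball of center $t$ and radius $\lambda$. *)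

From HB Require Import structures.
From mathcomp Require Import all_boot all_order all_algebra.
From mathcomp Require Import all_classical all_reals all_analysis.
Set Implicit Arguments. Unset Strict Implicit. Unset Printing Implicit Defensive.
Import Order.TTheory GRing.Theory Num.Theory.
Import numFieldNormedType.Exports.
Local Open Scope classical_set_scope.
Local Open Scope ring_scope.

Definition Rn (R : realType) (n : nat) :=
  g_sigma_algebraType (@open 'rV[R]_n).

Definition norm2 {R : realType} {n : nat} (v : 'rV[R]_n) : R :=
  Num.sqrt (\sum_(i < n) v ord0 i ^+ 2).

Definition ball2 {R : realType} {n : nat} (t : 'rV[R]_n) (lam : R) : set 'rV[R]_n :=
  [set s | norm2 (s - t) < lam].

Definition cube {R : realType} {n : nat} (a : 'rV[R]_n) (l : R) : set 'rV[R]_n :=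
  [set t | forall i : 'I_n, a ord0 i <= t ord0 i < a ord0 i + l].

Definition dside {R : realType} (m : int) : R := (2 : R) ^ (- m).
Definition dcorner {R : realType} {n : nat} (m : int) (j : 'I_n -> int) : 'rV[R]_n :=
  \row_i ((j i)%:~R * dside m).
Definition dcube {R : realType} {n : nat} (m : int) (j : 'I_n -> int) : set 'rV[R]_n :=
  cube (dcorner m j) (dside m).

Definition power_growth {R : realType} {n : nat}
  (mu : set (Rn R n) -> \bar R) (alpha : R) : Prop :=
  exists C : R, forall (a : 'rV[R]_n) (l : R), 0 < l ->
    (mu (cube a l : set (Rn R n)) <= (C * l `^ alpha)%:E)%E.

Definition rho_in {R : realType} {n : nat}
  (mu : set (Rn R n) -> \bar R) (alpha : R) (a : 'rV[R]_n) (l : R) : \bar R :=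
  ereal_sup [set y | exists t lam, cube a l t /\ 0 < lam < l /\
     y = (mu ((cube a l `&` ball2 t lam) : set (Rn R n)) * ((lam `^ alpha)^-1)%:E)%E].

(* the kernel t |-> |t - x|^(1 - alpha), with value in [0, +oo];
   at t = x: +oo if 1 - alpha < 0, 1 if alpha = 1, 0 if 1 - alpha > 0 *)
Definition kern {R : realType} {n : nat} (alpha : R) (x t : 'rV[R]_n) : \bar R :=
  if t == x then (if 1 - alpha < 0 then +oo%E else if alpha == 1 then 1%E else 0%E)
  else ((norm2 (t - x)) `^ (1 - alpha))%:E.

From HB Require Import structures.
From mathcomp Require Import all_boot all_order all_algebra.
From mathcomp Require Import all_classical all_reals all_analysis.
From mathcomp Require Import measurable_realfun.
From mathcomp Require Import ring lra zify.
Import Order.TTheory GRing.Theory Num.Theory.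
Import numFieldNormedType.Exports.
Local Open Scope classical_set_scope.
Local Open Scope ring_scope.

(* Let l be the side of I and r = rho_in(I), which may be assumed finite.  By
   definition of rho_in, mu(I ∩ B(t, lam)) <= r lam^alpha for t in I and
   lam < l; covering I by (2n+1)^n balls of radius l/2 centred at grid points
   of I then gives mu(I) <~ r l^alpha.
   If alpha <= 1, the kernel is at most (sqrt n l)^(1 - alpha) on I.
   If alpha > 1, let A_0 = I and A_k = B(x, l 2^-k).  On I the kernel is
   dominated by sum_k (2^(k+1)/l)^(alpha - 1) 1_{A_k}, whose k-th term
   integrates to <~ r l 2^-k, and the geometric series sums to <~ r l. *)

Lemma ge0_le_integral_nonmeasurable {d} {T : measurableType d} {R : realType}
    (mu : {measure set T -> \bar R}) {D : set T} {f g : T -> \bar R} :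
  (forall x, D x -> 0 <= f x)%E -> (forall x, D x -> f x <= g x)%E ->
  (\int[mu]_(x in D) f x <= \int[mu]_(x in D) g x)%E.
Proof.
move=> f_ge0 fg; have g_ge0 x (Dx : D x) := le_trans (f_ge0 x Dx) (fg x Dx).
rewrite (ge0_integralE _ f_ge0) (ge0_integralE _ g_ge0).
apply: ereal_sup_le => _ [h hf <-]; exists h => //= x.
apply: le_trans (hf x) _; rewrite /patch; case: ifP => // /set_mem.
exact: fg.
Qed.

Section euclidean_norm.
Context {R : realType} {n : nat}.
Implicit Types (v s t : 'rV[R]_n).

Lemma norm2_ge0 v : 0 <= norm2 v.
Proof. exact: sqrtr_ge0. Qed.

Lemma norm2_0 : norm2 (0 : 'rV[R]_n) = 0.
Proof. by rewrite /norm2 big1 ?sqrtr0 // => i _; rewrite mxE expr0n. Qed.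

Lemma norm2_eq0 v : norm2 v = 0 -> v = 0.
Proof.
rewrite /norm2 => /eqP; rewrite sqrtr_eq0 => sum_le0.
have sum_eq0 : \sum_(i < n) v ord0 i ^+ 2 = 0.
  by apply/eqP; rewrite eq_le sum_le0 sumr_ge0 // => i _; exact: sqr_ge0.
apply/matrixP => i j; rewrite (ord1 i) mxE.
have /eqP := psumr_eq0P (fun i _ => sqr_ge0 (v ord0 i)) sum_eq0 (i := j) isT.
by rewrite sqrf_eq0 => /eqP.
Qed.

Lemma norm2_le_coord v (b : R) : (forall i, `|v ord0 i| <= b) ->
  norm2 v <= Num.sqrt (n%:R * b ^+ 2).
Proof.
move=> vb; rewrite /norm2 ler_sqrt; last by rewrite mulr_ge0 // sqr_ge0.
have -> : n%:R * b ^+ 2 = \sum_(i < n) b ^+ 2 by rewrite sumr_const card_ord mulr_natl.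
by apply: ler_sum => i _; have := vb i; rewrite ler_norml => /andP[]; nra.
Qed.

Lemma continuous_norm2B t : continuous (fun s => norm2 (s - t)).
Proof.
move=> s; rewrite /norm2; apply: continuous_comp; last exact: sqrt_continuous.
apply: (@cvg_big R _ +%R 0 predT _ _ _ _ (fun i s => (s - t) ord0 i ^+ 2)).
- exact: add_continuous.
- exact: nbhs_filter.
move=> i _ /=.
have coordB_cvg : (fun y : 'rV[R]_n => (y - t) ord0 i) @ s --> (s - t) ord0 i.
  have -> : (fun y : 'rV[R]_n => (y - t) ord0 i) = (fun y => y ord0 i - t ord0 i).
    by apply/funext => y; rewrite !mxE.
  by rewrite !mxE; apply: (cvgB (@coord_continuous R 1 n ord0 i s) (cvg_cst _)).
rewrite expr2; under eq_fun do rewrite expr2.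
exact: (cvgM coordB_cvg coordB_cvg).
Qed.

Lemma measurable_ball2 t lam : measurable (ball2 t lam : set (Rn R n)).
Proof.
apply: sub_gen_smallest; apply: open_comp (@open_lt _ lam) => s _.
exact: continuous_norm2B.
Qed.

Lemma measurable_coord_lt i c :
  measurable ([set s : 'rV[R]_n | s ord0 i < c] : set (Rn R n)).
Proof.
apply: sub_gen_smallest; apply: open_comp (@open_lt _ c) => s _.
exact: coord_continuous.
Qed.

Lemma measurable_cube a l : measurable (cube a l : set (Rn R n)).
Proof.
have -> : cube a l = \bigcap_(i in [set: 'I_n])
    (~` [set s : 'rV[R]_n | s ord0 i < a ord0 i] `&`
        [set s | s ord0 i < a ord0 i + l]).
  apply/seteqP; split => s /= s_in.
    by move=> i _; have /andP[ai ia] := s_in i; split => //=; rewrite ltNge ai.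
  by move=> i; have [/negP] := s_in i I; rewrite -leNgt => -> ->.
apply: fin_bigcap_measurable; first exact: finite_finset.
by move=> i _; apply: measurableI; [apply: measurableC|]; exact: measurable_coord_lt.
Qed.

End euclidean_norm.

Section grid_cover.
Context {R : realType} {n : nat}.
Local Notation grid := {ffun 'I_n -> 'I_(n.*2).+1}.

Definition grid_point (a : 'rV[R]_n) (l : R) (s : grid) : 'rV[R]_n :=
  \row_i (a ord0 i + (s i)%:R * (l / (n.*2).+1%:R)).

Lemma cube_grid_point a l s : 0 < l -> cube a l (grid_point a l s).
Proof.
move=> l_gt0 i; rewrite mxE; apply/andP; split.
  by rewrite lerDl mulr_ge0 // divr_ge0 // ltW.
rewrite ltrD2l -ltr_pdivlMr ?divr_gt0 //.
by rewrite invf_div mulrCA divff ?gt_eqF // mulr1 ltr_nat.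
Qed.

(* The grid has mesh l/(2n+1), so every point of the cube lies within
   sqrt n * l/(2n+1) of a grid point, and 4n < (2n+1)^2. *)
Lemma cube_near_grid_point {a l t} : 0 < l -> cube a l t ->
  exists s : grid, norm2 (t - grid_point a l s) < l / 2.
Proof.
move=> l_gt0 t_in; set N := (n.*2).+1.
have N_gt0 : (0 : R) < N%:R by rewrite ltr0n.
have mesh_gt0 : 0 < l / N%:R by rewrite divr_gt0.
pose y i := (t ord0 i - a ord0 i) * N%:R / l.
have y_ge0 i : 0 <= y i.
  have /andP[ati _] := t_in i.
  by rewrite /y !mulr_ge0 ?invr_ge0 ?subr_ge0 ?(ltW l_gt0) ?(ltW N_gt0).
have y_lt i : (Num.truncn (y i) < N)%N.
  have /andP[_ tia] := t_in i.
  by rewrite truncn_lt_nat // /y ltr_pdivrMr // mulrC ltr_pM2l // ltrBlDl.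
exists [ffun i => Ordinal (y_lt i)].
apply: le_lt_trans (@norm2_le_coord _ _ _ (l / N%:R) _) _.
  move=> i; rewrite !mxE ffunE /=.
  have /andP[trunc_le] := truncn_itv (y_ge0 i); rewrite -natr1 => trunc_gt.
  have -> : t ord0 i - (a ord0 i + (Num.truncn (y i))%:R * (l / N%:R))
         = (y i - (Num.truncn (y i))%:R) * (l / N%:R).
    by rewrite /y; field; rewrite ?gt_eqF.
  rewrite normrM (gtr0_norm mesh_gt0) ger0_norm ?subr_ge0 //.
  by rewrite ler_piMl ?(ltW mesh_gt0) // lerBlDl ltW.
rewrite -(ger0_norm (ltW (divr_gt0 l_gt0 (ltr0n _ 2)))) -sqrtr_sqr.
rewrite ltr_sqrt ?exprn_gt0 ?divr_gt0 //.
have N2 : 4 * n%:R < N%:R ^+ 2 :> R.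
  by rewrite -natrX -(natrM R 4) ltr_nat /N -addn1 -mul2n expnS expn1; nia.
rewrite !expr_div_n mulrA ltr_pdivrMr ?exprn_gt0 // mulrAC ltr_pdivlMr //.
have : 0 < l ^+ 2 by exact: exprn_gt0.
nra.
Qed.

End grid_cover.

Section real_bounds.
Context {R : realType}.
Implicit Types (b c d q : R).

Lemma powR_div_mul_powRD1 c q b : 0 <= c -> 0 < q ->
  (c / q) `^ b * q `^ (b + 1) = c `^ b * q.
Proof.
move=> c_ge0 q_gt0.
rewrite powRD; last by rewrite (gt_eqF q_gt0) implybT.
rewrite powRr1 ?(ltW q_gt0) //.
have inv_pow : q^-1 `^ b * q `^ b = 1.
  by rewrite -powRM ?invr_ge0 ?(ltW q_gt0) // mulVf ?gt_eqF // powR1.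
by rewrite powRM ?invr_ge0 ?(ltW q_gt0) // -mulrA (mulrA (q^-1 `^ b)) inv_pow mul1r.
Qed.

Lemma powRN_le_div d q b : 0 < d -> 0 < q -> q / 2 <= d -> 0 <= b ->
  d `^ (- b) <= (2 / q) `^ b.
Proof.
move=> d_gt0 q_gt0 qd b_ge0; rewrite powRN.
rewrite -[(d `^ b)^-1]mul1r ler_pdivrMr ?powR_gt0 //.
rewrite -powRM ?(ltW d_gt0) ?divr_ge0 ?(ltW q_gt0) //.
apply: le_trans (_ : 1 `^ b <= _); first by rewrite powR1.
apply: ge0_ler_powR => //; rewrite ?nnegrE ?ler01 //.
  by rewrite mulr_ge0 ?divr_ge0 // ltW.
by rewrite mulrAC ler_pdivlMr // mul1r; lra.
Qed.

Lemma eseries_ge_cst_pinfty {u : nat -> R} {b} : 0 < b -> (forall k, b <= u k) ->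
  (\sum_(k <oo) (u k)%:E = +oo)%E.
Proof.
move=> b_gt0 ub; apply: eq_infty => y.
pose N := (Num.truncn (y / b)).+1.
apply: le_trans (_ : (\sum_(0 <= k < N) (u k)%:E)%R <= _)%E; last first.
  by apply: nneseries_lim_ge => k _ _; rewrite lee_fin (le_trans (ltW b_gt0)).
rewrite sumEFin lee_fin; apply: le_trans (_ : \sum_(0 <= k < N) b <= _).
  by rewrite sumr_const_nat subn0 -mulr_natl -ler_pdivrMr // ltW // truncnS_gt.
exact: ler_sum.
Qed.

Lemma eseries_geometric_half (M : R) :
  (\sum_(k <oo) ((M / (2 ^ (k + 1))%:R)%:E) = M%:E)%E.
Proof.
have := @cvg_geometric_eseries_half R M 0.
by rewrite expr0 divr1 => /cvg_lim <-.
Qed.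

Lemma pow2_gt0 k : (0 : R) < (2 ^ k)%:R.
Proof. by rewrite ltr0n expn_gt0. Qed.

Lemma exists_dyadic_scale {l d : R} : 0 < l -> 0 < d ->
  exists k, l / (2 ^ k)%:R / 2 <= d /\ ((0 < k)%N -> d < l / (2 ^ k)%:R).
Proof.
move=> l_gt0 d_gt0.
have exk : exists k, l / (2 ^ k)%:R / 2 <= d.
  exists (Num.truncn (l / d)); set k := Num.truncn (l / d).
  have : l / d < k.+1%:R by exact: truncnS_gt.
  rewrite ltr_pdivrMr // => lt_kd.
  have : (k.+1%:R : R) <= (2 ^ k)%:R by rewrite ler_nat ltn_expl.
  rewrite ler_pdivrMr // ler_pdivrMr //; nra.
case: (ex_minnP exk) => k scale_k k_min; exists k; split => // /prednK k_eq.
rewrite ltNge; apply/negP => le_dk.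
have halve : l / (2 ^ k.-1)%:R / 2 = l / (2 ^ k)%:R.
  by rewrite -{2}k_eq expnS natrM; field; rewrite pnatr_eq0 expn_eq0.
have := k_min k.-1; rewrite halve => /(_ le_dk).
by rewrite -{1}k_eq ltnn.
Qed.

End real_bounds.

Definition cover_const {R : realType} (n : nat) (alpha : R) : R :=
  #|{ffun 'I_n -> 'I_(n.*2).+1}|%:R * (2^-1) `^ alpha.

Definition bounded_kern_const {R : realType} (n : nat) (alpha : R) : R :=
  Num.sqrt n%:R `^ (1 - alpha) * cover_const n alpha.

Definition singular_kern_const {R : realType} (n : nat) (alpha : R) : R :=
  2 * 2 `^ (alpha - 1) * (cover_const n alpha + 1).

Lemma cover_const_ge0 {R : realType} n (alpha : R) : 0 <= cover_const n alpha.
Proof. by rewrite mulr_ge0 ?powR_ge0. Qed.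

Lemma bounded_kern_const_ge0 {R : realType} n (alpha : R) :
  0 <= bounded_kern_const n alpha.
Proof. by rewrite mulr_ge0 ?powR_ge0 ?cover_const_ge0. Qed.

Lemma singular_kern_const_gt0 {R : realType} n (alpha : R) :
  0 < singular_kern_const n alpha.
Proof.
by rewrite !mulr_gt0 ?powR_gt0 // ltr_wpDl ?cover_const_ge0.
Qed.

Lemma kern_ge0 {R : realType} {n} (alpha : R) (x t : 'rV[R]_n) :
  (0 <= kern alpha x t)%E.
Proof.
rewrite /kern; case: ifP => _; last by rewrite lee_fin powR_ge0.
by case: ifP => _ //; case: ifP.
Qed.

Section kern_integral.
Context {R : realType} {n : nat} {mu : {measure set (Rn R n) -> \bar R}}.
Context {alpha : R} {a : 'rV[R]_n} {l r : R}.
Hypotheses (l_gt0 : 0 < l) (r_ge0 : 0 <= r).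
Hypothesis mu_cube_ball : forall t lam, cube a l t -> 0 < lam < l ->
  (mu (cube a l `&` ball2 t lam : set (Rn R n)) <= (r * lam `^ alpha)%:E)%E.
Local Notation I := (cube a l : set (Rn R n)).
Local Notation grid := {ffun 'I_n -> 'I_(n.*2).+1}.

Lemma measure_cube_le : (mu I <= (cover_const n alpha * r * l `^ alpha)%:E)%E.
Proof.
pose s0 : grid := [ffun _ => ord0].
pose B k := I `&` ball2 (grid_point a l (nth s0 (enum grid) k)) (l / 2).
have := @content_subadditive _ _ _ mu I B #|grid|.
move=> /(_ _ (measurable_cube a l)) subadd; apply: le_trans (subadd _ _) _.
- by move=> k _; apply: measurableI; [exact: measurable_cube | exact: measurable_ball2].
- move=> t t_in; have [s ts] := cube_near_grid_point l_gt0 t_in.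
  rewrite -bigcup_mkord; exists (index s (enum grid)).
    by rewrite /= cardE index_mem mem_enum.
  by rewrite /B nth_index ?mem_enum.
have -> : cover_const n alpha * r * l `^ alpha = \sum_(k < #|grid|) r * (l / 2) `^ alpha.
  rewrite sumr_const card_ord -[RHS]mulr_natl /cover_const.
  by rewrite powRM ?(ltW l_gt0) ?invr_ge0 //; ring.
rewrite -sumEFin; apply: lee_sum => k _; apply: mu_cube_ball.
  exact: cube_grid_point.
by rewrite divr_gt0 //= ltr_pdivrMr // ltr_pMr // ltr1n.
Qed.

Context {x : 'rV[R]_n}.
Hypothesis x_in : cube a l x.

Lemma integral_kern_le_bounded : alpha <= 1 ->
  (\int[mu]_(t in I) kern alpha x t <= (bounded_kern_const n alpha * l * r)%:E)%E.
Proof.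
move=> alpha_le1; pose M := (Num.sqrt n%:R * l) `^ (1 - alpha).
have kern_le t : I t -> (kern alpha x t <= M%:E)%E.
  move=> t_in; rewrite /kern; case: eqP => [_|_].
    rewrite ltNge subr_ge0 alpha_le1 /=; case: eqP => [alpha1|_].
      by rewrite /M alpha1 subrr powRr0.
    by rewrite lee_fin powR_ge0.
  rewrite lee_fin; apply: ge0_ler_powR; rewrite ?nnegrE ?subr_ge0 ?norm2_ge0 //.
    by rewrite mulr_ge0 ?sqrtr_ge0 ?(ltW l_gt0).
  apply: le_trans (@norm2_le_coord _ _ (t - x) l _) _.
    move=> i; rewrite !mxE; have /andP[? ?] := t_in i; have /andP[? ?] := x_in i.
    by rewrite ler_norml; apply/andP; split; lra.
  by rewrite sqrtrM // sqrtr_sqr ger0_norm // ltW.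
apply: le_trans (ge0_le_integral_nonmeasurable mu (g := fun=> M%:E)
  (fun t _ => kern_ge0 alpha x t) kern_le) _.
rewrite integral_cst; last exact: measurable_cube.
apply: le_trans (lee_wpmul2l _ measure_cube_le) _; first by rewrite lee_fin powR_ge0.
have l_pow : l `^ (1 - alpha) * l `^ alpha = l.
  by rewrite -powRD ?subrK ?powRr1 ?(ltW l_gt0) // gt_eqF // implybT.
rewrite -EFinM lee_fin /M powRM ?sqrtr_ge0 ?(ltW l_gt0) //.
set s := Num.sqrt n%:R `^ (1 - alpha); set K := cover_const n alpha.
have -> : s * l `^ (1 - alpha) * (K * r * l `^ alpha)
    = s * K * r * (l `^ (1 - alpha) * l `^ alpha) by ring.
by rewrite l_pow mulrAC lexx.
Qed.

Section singular.
Hypothesis alpha_gt1 : 1 < alpha.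

Definition layer_radius (k : nat) : R := l / (2 ^ k)%:R.

Definition layer (k : nat) : set (Rn R n) :=
  if k is 0 then I else ball2 x (layer_radius k).

Definition layer_weight (k : nat) : R := (2 / layer_radius k) `^ (alpha - 1).

Definition weighted_layer (k : nat) (t : Rn R n) : \bar R :=
  ((layer_weight k)%:E * (\1_(layer k) t)%:E)%E.

Lemma layer_radius_gt0 k : 0 < layer_radius k.
Proof. by rewrite divr_gt0 ?pow2_gt0. Qed.

Lemma layer_radius0 : layer_radius 0 = l.
Proof. by rewrite /layer_radius expn0 divr1. Qed.

Lemma layer_radius_le k : layer_radius k <= l.
Proof.
by rewrite ler_pdivrMr ?pow2_gt0 // ler_peMr ?(ltW l_gt0) // ler1n expn_gt0.
Qed.

Lemma layer_radius_lt k : (0 < k)%N -> layer_radius k < l.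
Proof.
move=> k_gt0; rewrite ltr_pdivrMr ?pow2_gt0 // ltr_pMr // ltr1n.
by rewrite -{1}(expn0 2) ltn_exp2l.
Qed.

Lemma layer_weight_gt0 k : 0 < layer_weight k.
Proof. by rewrite powR_gt0 // divr_gt0 ?layer_radius_gt0. Qed.

Lemma layer_weight0_le k : layer_weight 0 <= layer_weight k.
Proof.
rewrite /layer_weight; apply: ge0_ler_powR;
  rewrite ?nnegrE ?subr_ge0 ?divr_ge0 ?(ltW l_gt0) ?(ltW alpha_gt1) //.
have radius_gt0 := layer_radius_gt0.
by rewrite ler_wpM2l // lef_pV2 ?posrE // layer_radius0 layer_radius_le.
Qed.

Lemma layer_weight_mul_powR k :
  layer_weight k * layer_radius k `^ alpha = 2 `^ (alpha - 1) * layer_radius k.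
Proof.
have := @powR_div_mul_powRD1 R 2 (layer_radius k) (alpha - 1) (ler0n _ 2)
  (layer_radius_gt0 k).
by rewrite subrK.
Qed.

Lemma layer_center k : layer k x.
Proof. by case: k => [|k] //=; rewrite /ball2 /= subrr norm2_0 layer_radius_gt0. Qed.

Lemma measurable_layer k : measurable (layer k).
Proof. by case: k => [|k]; [exact: measurable_cube | exact: measurable_ball2]. Qed.

Lemma weighted_layer_ge0 k t : (0 <= weighted_layer k t)%E.
Proof. by rewrite mule_ge0 // lee_fin ltW ?layer_weight_gt0. Qed.

Lemma measurable_weighted_layer k : measurable_fun I (weighted_layer k).
Proof.
apply: measurable_funeM; apply/measurable_EFinP.
exact: measurable_indic (measurable_layer k).
Qed.

Lemma kern_le_layers t : I t ->
  (kern alpha x t <= \sum_(k <oo) weighted_layer k t)%E.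
Proof.
move=> t_in; rewrite /kern; case: eqP => [->|/eqP t_neq].
  rewrite subr_lt0 alpha_gt1 (@eq_eseriesr _ _ (fun k => (layer_weight k)%:E)).
    by rewrite (eseries_ge_cst_pinfty (layer_weight_gt0 0) layer_weight0_le).
  by move=> k _; rewrite /weighted_layer indicE mem_set ?mule1 //; exact: layer_center.
have d_gt0 : 0 < norm2 (t - x).
  rewrite lt_neqAle norm2_ge0 andbT eq_sym; apply/negP => /eqP /norm2_eq0 /eqP.
  by rewrite subr_eq0; exact/negP.
have [k [half_le lt_k]] := exists_dyadic_scale l_gt0 d_gt0.
have t_in_k : layer k t by case: k half_le lt_k => [|k] _ // /(_ isT).
apply: le_trans (_ : weighted_layer k t <= _)%E.
  rewrite /weighted_layer indicE mem_set // mule1 lee_fin.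
  have -> : 1 - alpha = - (alpha - 1) by rewrite opprB.
  by rewrite powRN_le_div ?layer_radius_gt0 // subr_ge0 ltW.
apply: le_trans (nneseries_lim_ge k.+1 (fun i _ _ => weighted_layer_ge0 i t)).
by rewrite big_nat_recr //= leeDr // sume_ge0 // => i _; exact: weighted_layer_ge0.
Qed.

Lemma integral_layer_le k :
  (\int[mu]_(t in I) weighted_layer k t
    <= ((singular_kern_const n alpha * l * r) / (2 ^ (k + 1))%:R)%:E)%E.
Proof.
have mI := measurable_cube a l; have mL := measurable_layer k.
rewrite /weighted_layer ge0_integralZl_EFin ?(ltW (layer_weight_gt0 k)) //; last first.
  by apply/measurable_EFinP; exact: measurable_indic.
rewrite integral_indic // /layer.
have two_pow_ge0 : 0 <= 2 `^ (alpha - 1) * l * r.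
  by rewrite !mulr_ge0 ?powR_ge0 ?(ltW l_gt0).
set K := cover_const n alpha.
case: k {mL} => [|k].
  rewrite /= setIid.
  apply: le_trans (lee_wpmul2l _ measure_cube_le) _.
    by rewrite lee_fin ltW ?layer_weight_gt0.
  have := layer_weight_mul_powR 0; rewrite layer_radius0 => w_pow.
  rewrite -EFinM lee_fin -/K.
  have -> : layer_weight 0 * (K * r * l `^ alpha) = K * (2 `^ (alpha - 1) * l * r).
    by rewrite -w_pow; ring.
  have -> : singular_kern_const n alpha * l * r / (2 ^ (0 + 1))%:R
      = (K + 1) * (2 `^ (alpha - 1) * l * r).
    by rewrite /singular_kern_const -/K add0n expn1; field.
  by rewrite ler_wpM2r // lerDl.
rewrite /= setIC.
have radius_in : 0 < layer_radius k.+1 < l by rewrite layer_radius_gt0 layer_radius_lt.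
apply: le_trans (lee_wpmul2l _ (mu_cube_ball _ _ x_in radius_in)) _.
  by rewrite lee_fin ltW ?layer_weight_gt0.
rewrite -EFinM lee_fin.
have -> : layer_weight k.+1 * (r * layer_radius k.+1 `^ alpha)
    = 2 `^ (alpha - 1) * l * r / (2 ^ k.+1)%:R * 1.
  rewrite mulrCA layer_weight_mul_powR /layer_radius.
  by field; rewrite pnatr_eq0 expn_eq0.
have -> : singular_kern_const n alpha * l * r / (2 ^ (k.+1 + 1))%:R
    = 2 `^ (alpha - 1) * l * r / (2 ^ k.+1)%:R * (K + 1).
  rewrite /singular_kern_const -/K addn1 expnS natrM.
  by field; rewrite pnatr_eq0 expn_eq0.
by rewrite ler_wpM2l ?divr_ge0 ?(ltW (pow2_gt0 _)) // lerDr cover_const_ge0.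
Qed.

Lemma integral_kern_le_singular :
  (\int[mu]_(t in I) kern alpha x t <= (singular_kern_const n alpha * l * r)%:E)%E.
Proof.
apply: le_trans (ge0_le_integral_nonmeasurable mu
  (g := fun t => \sum_(k <oo) weighted_layer k t)%E (fun t _ => kern_ge0 alpha x t)
  kern_le_layers) _.
rewrite (integral_nneseries _ (measurable_cube a l) measurable_weighted_layer
  (fun k t _ => weighted_layer_ge0 k t)).
rewrite -(eseries_geometric_half (singular_kern_const n alpha * l * r)).
apply: lee_nneseries => [k _ _|k _ ]; last exact: integral_layer_le.
exact: integral_ge0 (fun t _ => weighted_layer_ge0 k t).
Qed.

End singular.
End kern_integral.

Lemma rho_in_ge0 {R : realType} {n} (mu : {measure set (Rn R n) -> \bar R})
    (alpha : R) (a : 'rV[R]_n) (l : R) :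
  0 < l -> (0 <= rho_in mu alpha a l)%E.
Proof.
move=> l_gt0; apply: le_trans (ereal_sup_ubound _); last first.
  exists a, (l / 2); split; first by move=> i; rewrite lexx ltrDl.
  by split => //; apply/andP; split; [rewrite divr_gt0 | lra].
by rewrite mule_ge0 ?measure_ge0 // lee_fin invr_ge0 powR_ge0.
Qed.

Lemma measure_cube_ball_le_rho_in {R : realType} {n}
    {mu : {measure set (Rn R n) -> \bar R}} {alpha : R} {a : 'rV[R]_n} {l r : R} :
  rho_in mu alpha a l = r%:E -> forall t lam, cube a l t -> 0 < lam < l ->
  (mu (cube a l `&` ball2 t lam : set (Rn R n)) <= (r * lam `^ alpha)%:E)%E.
Proof.
move=> rho_r t lam t_in /andP[lam_gt0 lam_lt].
have pow_gt0 : 0 < lam `^ alpha by exact: powR_gt0.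
have : (mu (cube a l `&` ball2 t lam : set (Rn R n)) * ((lam `^ alpha)^-1)%:E
    <= r%:E)%E.
  rewrite -rho_r; apply: ereal_sup_ubound; exists t, lam.
  by split => //; split => //; apply/andP.
case: (mu _) => [u| |] //.
- by rewrite -EFinM !lee_fin ler_pdivrMr.
- by rewrite gt0_mulye ?lte_fin ?invr_gt0.
- by rewrite leNye.
Qed.

Theorem lemma5p1 (R : realType) (n : nat) (alpha : R) :
  0 < alpha -> alpha <= n%:R ->
  exists C : R, 0 < C /\
  forall (mu : {measure set (Rn R n) -> \bar R}),
    power_growth mu alpha ->
    forall (m : int) (j : 'I_n -> int) (x : 'rV[R]_n),
      dcube m j x ->
      (\int[mu]_(t in (dcube m j : set (Rn R n))) kern alpha x t
        <= (C * dside m)%:E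
           * rho_in mu alpha (dcorner m j) (dside m))%E.
Proof.
move=> _ _; pose C := bounded_kern_const n alpha + singular_kern_const n alpha.
have C_gt0 : 0 < C by rewrite ltr_wpDl ?bounded_kern_const_ge0 ?singular_kern_const_gt0.
exists C; split => // mu _ m j x; rewrite /dcube => x_in.
have l_gt0 : 0 < dside m :> R by rewrite /dside exprz_gt0.
have := rho_in_ge0 mu alpha (dcorner m j) (dside m) l_gt0.
case rho_r : rho_in => [r| |] // r_ge0; last first.
  by rewrite gt0_muley ?lte_fin ?mulr_gt0 // leey.
rewrite lee_fin in r_ge0; have mu_ball := measure_cube_ball_le_rho_in rho_r.
rewrite -EFinM; have [alpha_le1|alpha_gt1] := leP alpha 1.
- apply: le_trans (integral_kern_le_bounded l_gt0 mu_ball x_in alpha_le1) _.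
  by rewrite lee_fin !ler_wpM2r ?(ltW l_gt0) // lerDl ltW ?singular_kern_const_gt0.
- apply: le_trans (integral_kern_le_singular l_gt0 r_ge0 mu_ball x_in alpha_gt1) _.
  by rewrite lee_fin !ler_wpM2r ?(ltW l_gt0) // lerDr bounded_kern_const_ge0.
Qed.
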